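(* Let $\pi^{(d)}$ be $\tau^{(d)}$ (with $d\ge6$) or $\sigma^{(d)}$ (with $d\ge8$). If $\beta\le d$ and $\beta\equiv 2\pmod 4$, then $v=\sum_{\alpha=1}^{\beta}(-1)^\alpha e_\alpha\in\{e_\alpha\}_{\alpha\in\mathcal{A}}^{\Omega^{(d)}}$.
   Context: Alphabet $\mathcal{A}=\{1,\dots,d\}$; $\tau^{(d)}$ has top row $1,2,\dots,d$ and bottom row $d,d-1,\dots,6,3,2,5,4,1$; $\sigma^{(d)}$ has top row $1,\dots,d$ and bottom row $d,d-1,\dots,8,3,2,7,6,5,4,1$ (rows list letters in order of $\pi_{\mathrm t}$, $\pi_{\mathrm b}$). $\Omega^{(d)}=\Omega_{\pi^{(d)}}$ where $(\Omega_\pi)_{\alpha\beta}=+1$ if $\pi_{\mathrm t}(\alpha)<\pi_{\mathrm t}(\beta)$ and $\pi_{\mathrm b}(\alpha)>\pi_{\mathrm b}(\beta)$, $-1$ if the reverse inequalities hold, $0$ otherwise; $\langle u,v\rangle=u\Omega^{(d)}v^{\intercal}$ on $\mathbb{Z}^{\mathcal{A}}$, with canonical basis $e_\alpha$. A set $X\subseteq\mathbb{Z}^{\mathcal{A}}$ is $\Omega^{(d)}$-closed if $X=-X$ and for all $v,w\in X$ with $\langle v,w\rangle=1$ one has $v+w,v-w\in X$; $Y^{\Omega^{(d)}}$ denotes the smallest $\Omega^{(d)}$-closed set containing $Y$. *)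

From mathcomp Require Import all_boot all_order all_algebra.
Unset Implicit Arguments. Unset Strict Implicit. Unset Printing Implicit Defensive.
Import Order.TTheory GRing.Theory Num.Theory.
Local Open Scope ring_scope.

(* Letters of the alphabet {1,...,d} are represented by i : 'I_d, standing
   for the letter i.+1.  The top row of both permutations is 1,2,...,d, so
   pi_t(a) = a.  Below, pib d a is the position (1-based) of the letter a
   in the bottom row. *)

(* tau^(d): bottom row d, d-1, ..., 6, 3, 2, 5, 4, 1 *)
Definition pib_tau (d a : nat) : nat :=
  match a with
  | 1 => d
  | 2 => d - 3
  | 3 => d - 4
  | 4 => d - 1
  | 5 => d - 2
  | _ => d.+1 - a
  end%N.

(* sigma^(d): bottom row d, d-1, ..., 8, 3, 2, 7, 6, 5, 4, 1 *)
Definition pib_sigma (d a : nat) : nat :=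
  match a with
  | 1 => d
  | 2 => d - 5
  | 3 => d - 6
  | 4 => d - 1
  | 5 => d - 2
  | 6 => d - 3
  | 7 => d - 4
  | _ => d.+1 - a
  end%N.

Definition omega_entry (pib : nat -> nat) (a b : nat) : int :=
  if (a < b)%N && (pib b < pib a)%N then 1
  else if (b < a)%N && (pib a < pib b)%N then -1
  else 0.

Definition Omega (pib : nat -> nat -> nat) (d : nat) : 'M[int]_d :=
  \matrix_(i < d, j < d) omega_entry (pib d) i.+1 j.+1.

Definition form (pib : nat -> nat -> nat) (d : nat) (u v : 'rV[int]_d) : int :=
  (u *m Omega pib d *m v^T) 0 0.

Definition Omega_closed (pib : nat -> nat -> nat) (d : nat)
    (X : 'rV[int]_d -> Prop) : Prop :=
  (forall v, X v <-> X (- v)) /\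
  (forall v w, X v -> X w -> form pib d v w = 1 -> X (v + w) /\ X (v - w)).

Definition Omega_closure (pib : nat -> nat -> nat) (d : nat)
    (Y : 'rV[int]_d -> Prop) (v : 'rV[int]_d) : Prop :=
  forall X, Omega_closed pib d X -> (forall y, Y y -> X y) -> X v.

Definition e_vec (d : nat) (i : 'I_d) : 'rV[int]_d := delta_mx 0 i.

Definition canonical_basis (d : nat) (v : 'rV[int]_d) : Prop :=
  exists i : 'I_d, v = e_vec d i.

Definition alt_vec (d beta : nat) : 'rV[int]_d :=
  \row_(i < d) (if (i.+1 <= beta)%N then (-1) ^+ i.+1 else 0).

(* Above the diagonal, Omega^(d) is +1 except on the zero block of rows {2,3} and
   columns {4,...,k}, where k = 5 for tau and k = 7 for sigma; in particular rows 2
   and 3 agree on every column a >= 4.  Hence, for even n >= 4, the vector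
   v_n = sum_(a <= n) (-1)^a e_a satisfies <e_1, v_n> = <e_n, v_n> = 1, also
   <e_(n-1), v_n> = 1 if n >= 6, and <e_a, v_n> = 0 for every a > n.  These pairings
   are enough to obtain v_(n+4) from e_1, e_(n-1), ..., e_(n+4) and v_n by a fixed
   sequence of closure operations, so the theorem follows by induction from
   v_2 = -(e_1 - e_2) and from v_6, whose derivation depends on the exact shape of
   tau or sigma. *)

From mathcomp Require Import all_boot all_order all_algebra zify ring.
Import Order.TTheory GRing.Theory Num.Theory.
Local Open Scope ring_scope.

Section FormAlgebra.
Variables (pib : nat -> nat -> nat) (d : nat).
Implicit Types (u v w : 'rV[int]_d).
Local Notation form := (form pib d).

Lemma formDl u v w : form (u + v) w = form u w + form v w.
Proof. by rewrite /form !mulmxDl mxE. Qed.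

Lemma formDr u v w : form u (v + w) = form u v + form u w.
Proof. by rewrite /form raddfD mulmxDr mxE. Qed.

Lemma formNl u w : form (- u) w = - form u w.
Proof. by rewrite /form !mulNmx mxE. Qed.

Lemma formNr u w : form u (- w) = - form u w.
Proof. by rewrite /form raddfN mulmxN mxE. Qed.

Lemma omega_entryC (f : nat -> nat) a b : omega_entry f a b = - omega_entry f b a.
Proof. by rewrite /omega_entry; repeat case: ifP; lia. Qed.

Lemma tr_Omega : (Omega pib d)^T = - Omega pib d.
Proof. by apply/matrixP => i j; rewrite !mxE omega_entryC. Qed.

Lemma formC u w : form u w = - form w u.
Proof.
rewrite /form -[in RHS]trace_mx11 -mxtrace_tr -trace_mx11.
by rewrite !trmx_mul trmxK tr_Omega mulNmx mulmxN raddfN opprK mulmxA.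
Qed.

Lemma formxx u : form u u = 0.
Proof. have := formC u u; lia. Qed.

End FormAlgebra.

Section OmegaClosed.
Context {pib : nat -> nat -> nat} {d : nat} {X : 'rV[int]_d -> Prop}.
Hypothesis closedX : Omega_closed pib d X.

Lemma Omega_closedN v : X v -> X (- v).
Proof. by case: closedX => /(_ v) []. Qed.

Lemma Omega_closedD u w : X u -> X w -> form pib d u w = 1 -> X (u + w).
Proof. by case: closedX => _ closedDB Xu Xw /(closedDB _ _ Xu Xw) []. Qed.

Lemma Omega_closedB u w : X u -> X w -> form pib d u w = 1 -> X (u - w).
Proof. by case: closedX => _ closedDB Xu Xw /(closedDB _ _ Xu Xw) []. Qed.

End OmegaClosed.

Lemma Omega_closure_closed pib d Y : Omega_closed pib d (Omega_closure pib d Y).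
Proof.
split=> [v | v w Xv Xw vw1]; [split=> Xv X closedX XY | split=> X closedX XY].
- by apply: (Omega_closedN closedX); apply: Xv.
- by rewrite -[v]opprK; apply: (Omega_closedN closedX); apply: Xv.
- by apply: (Omega_closedD closedX) vw1; [apply: Xv | apply: Xw].
- by apply: (Omega_closedB closedX) vw1; [apply: Xv | apply: Xw].
Qed.

Lemma Omega_closure_sub pib d (Y : 'rV[int]_d -> Prop) v :
  Y v -> Omega_closure pib d Y v.
Proof. by move=> Yv X _; apply. Qed.

(* Proves [X t] by reading the term [t] as a derivation tree: each [- _], [_ - _],
   [_ + _] is one closure operation, [gram] proves the pairings equal to 1 and
   [leaf] the membership of the leaves.  Since [x - y] is also [x + - y], both
   readings are tried. *)
Ltac Omega_derive closedX leaf gram :=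
  match goal with
  | |- _ (- _) => apply: (Omega_closedN closedX); Omega_derive closedX leaf gram
  | |- _ (_ - _) => apply: (Omega_closedB closedX);
      [Omega_derive closedX leaf gram | Omega_derive closedX leaf gram | solve [gram]]
  | |- _ (_ + _) => apply: (Omega_closedD closedX);
      [Omega_derive closedX leaf gram | Omega_derive closedX leaf gram | solve [gram]]
  | |- _ => leaf
  end.

Section OmegaClosedExtend.
Context {pib : nat -> nat -> nat} {d : nat} {X : 'rV[int]_d -> Prop}.
Hypothesis closedX : Omega_closed pib d X.
Local Notation form := (form pib d).

(* Applied with u = e_1, F j = e_(n-1+j) and V = v_n. *)
Lemma Omega_closed_extend (u V : 'rV[int]_d) (F : nat -> 'rV[int]_d) :
  X u -> X V -> (forall j, (j <= 5)%N -> X (F j)) ->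
  form u V = 1 -> (forall j, (j <= 5)%N -> form u (F j) = 1) ->
  (forall i j, (i < j <= 5)%N -> form (F i) (F j) = 1) ->
  (forall j, (j <= 5)%N -> form (F j) V = (j <= 1)%N%:R) ->
  X (V - F 2 + F 3 - F 4 + F 5).
Proof.
move=> Xu XV XF uV uF FF FV.
have Fu j : (j <= 5)%N -> form (F j) u = -1 by move=> ?; rewrite formC uF.
have VF j : (j <= 5)%N -> form V (F j) = - (j <= 1)%N%:R by move=> ?; rewrite formC FV.
have Vu : form V u = -1 by rewrite formC uV.
have {}FF i j : (i <= 5)%N -> (j <= 5)%N ->
    form (F i) (F j) = (i < j)%N%:R - (j < i)%N%:R.
  move=> i_le5 j_le5; case: ltngtP => [lt_ij | lt_ji | ->]; rewrite ?formxx //.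
  - by rewrite FF ?lt_ij // subr0.
  - by rewrite formC FF ?lt_ji // sub0r.
pose p := F 1 - F 5 + (u + F 2 - (F 0 + V)).
pose q := F 1 + V - F 4 + (u + F 3 - (F 0 + V)).
have -> : V - F 2 + F 3 - F 4 + F 5 = - (p - q).
  by apply/rowP => i; rewrite /p /q !mxE; ring.
rewrite /p /q; Omega_derive closedX ltac:(first [assumption | apply: XF; done])
  ltac:(rewrite ?(formDl, formDr, formNl, formNr) ?formxx
          ?uV ?Vu ?uF ?Fu ?FV ?VF ?FF //=).
Qed.

End OmegaClosedExtend.

(* [letter_vec d a] is e_a for the letter [a] numbered from 1 as in the paper,
   whereas [e_vec d i] is indexed by [i : 'I_d]; it is the zero vector unless
   [0 < a <= d]. *)
Definition letter_vec (d a : nat) : 'rV[int]_d := \row_(i < d) (i.+1 == a)%:R.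

Lemma letter_vec_ord d (i : 'I_d) : letter_vec d i.+1 = e_vec d i.
Proof. by apply/rowP => j; rewrite !mxE eqSS. Qed.

Lemma letter_ord d a : (0 < a <= d)%N -> exists i : 'I_d, a = i.+1.
Proof.
move=> a_range; have lt_a'_d : (a.-1 < d)%N by lia.
by exists (Ordinal lt_a'_d) => /=; lia.
Qed.

Lemma letter_vec_basis d a : (0 < a <= d)%N -> canonical_basis d (letter_vec d a).
Proof. by case/letter_ord=> i ->; exists i; rewrite letter_vec_ord. Qed.

Lemma form_letter_vec pib d a b : (0 < a <= d)%N -> (0 < b <= d)%N ->
  form pib d (letter_vec d a) (letter_vec d b) = omega_entry (pib d) a b.
Proof.
case/letter_ord=> i ->; case/letter_ord=> j ->.
by rewrite !letter_vec_ord /form /e_vec -rowE trmx_delta -colE !mxE.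
Qed.

Lemma alt_vec0 d : alt_vec d 0 = 0.
Proof. by apply/rowP => i; rewrite !mxE. Qed.

Lemma alt_vecS d n :
  alt_vec d n.+1 = alt_vec d n + (-1) ^+ n.+1 *: letter_vec d n.+1.
Proof.
apply/rowP => i; rewrite !mxE eqSS ltnS leq_eqVlt.
by case: eqP => [-> | _]; rewrite /= ?ltnn ?mulr1 ?mulr0 ?addr0 ?add0r.
Qed.

Lemma alt_vecSS d n : ~~ odd n ->
  alt_vec d n.+2 = alt_vec d n - letter_vec d n.+1 + letter_vec d n.+2.
Proof.
move=> even_n; rewrite !alt_vecS !exprS !mulN1r opprK -signr_odd (negPf even_n).
by rewrite expr0 scaleN1r scale1r.
Qed.

Definition omega_block (k a b : nat) : int :=
  let blocked x y := [&& (x == 2) || (x == 3), 4 <= y & y <= k]%N in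
  if (a < b)%N then (if blocked a b then 0 else 1)
  else if (b < a)%N then (if blocked b a then 0 else -1)
  else 0.

Lemma omega_entry_tau d : (6 <= d)%N ->
  forall a b, (0 < a <= d)%N -> (0 < b <= d)%N ->
  omega_entry (pib_tau d) a b = omega_block 5 a b.
Proof.
move=> + a b.
case: a => [|[|[|[|[|[|a]]]]]]; case: b => [|[|[|[|[|[|b]]]]]];
rewrite /omega_block /omega_entry /pib_tau /=; repeat case: ifP; lia.
Qed.

Lemma omega_entry_sigma d : (8 <= d)%N ->
  forall a b, (0 < a <= d)%N -> (0 < b <= d)%N ->
  omega_entry (pib_sigma d) a b = omega_block 7 a b.
Proof.
move=> + a b.
case: a => [|[|[|[|[|[|[|[|a]]]]]]]]; case: b => [|[|[|[|[|[|[|[|b]]]]]]]];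
rewrite /omega_block /omega_entry /pib_sigma /=; repeat case: ifP; lia.
Qed.

Section BlockOmega.
Context {pib : nat -> nat -> nat} {d k : nat}.
Hypothesis omega_pib : forall a b, (0 < a <= d)%N -> (0 < b <= d)%N ->
  omega_entry (pib d) a b = omega_block k a b.

Local Notation e := (letter_vec d).
Local Notation form := (form pib d).
Local Notation cl := (Omega_closure pib d (canonical_basis d)).

Lemma form_letter_block a b : (0 < a <= d)%N -> (0 < b <= d)%N ->
  form (e a) (e b) = omega_block k a b.
Proof. by move=> a_range b_range; rewrite form_letter_vec ?omega_pib. Qed.

Lemma form_letter_lt a b : (0 < a)%N -> (a < b <= d)%N -> a != 2%N -> a != 3%N ->
  form (e a) (e b) = 1.
Proof.
move=> a_gt0 ab_range a_ne2 a_ne3; rewrite form_letter_block; try lia.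
by rewrite /omega_block; case: ifP; case: ifP; lia.
Qed.

Lemma form_letter_gt a b : (0 < a)%N -> (a < b <= d)%N -> a != 2%N -> a != 3%N ->
  form (e b) (e a) = -1.
Proof. by move=> *; rewrite formC form_letter_lt. Qed.

Lemma form_letter_23 a : (4 <= a <= d)%N -> form (e a) (e 2) = form (e a) (e 3).
Proof.
move=> a_range; rewrite !form_letter_block; try lia.
by rewrite /omega_block; repeat case: ifP; lia.
Qed.

Lemma letter_closure a : (0 < a <= d)%N -> cl (e a).
Proof. by move=> a_range; apply: Omega_closure_sub; apply: letter_vec_basis. Qed.

Lemma form_alt_vec n : ~~ odd n -> (4 <= n <= d)%N ->
  [/\ form (e 1) (alt_vec d n) = 1, form (e n) (alt_vec d n) = 1
    & forall a, (n < a <= d)%N -> form (e a) (alt_vec d n) = 0].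
Proof.
move=> even_n n_range.
have [j n_eq] : exists j, n = (j.*2 + 4)%N.
  exists (n./2 - 2)%N; rewrite -[n in LHS](odd_double_half n) (negPf even_n).
  lia.
rewrite {}n_eq {even_n} in n_range *.
elim: j n_range => [|j IH] n_range.
- rewrite double0 add0n (alt_vecSS d 2) // (alt_vecSS d 0) // alt_vec0 sub0r.
  split=> [|| a a_range]; rewrite !(formDr, formNr) ?formxx.
  + by rewrite !(form_letter_lt 1) //; lia.
  + by rewrite (form_letter_23 4) ?(form_letter_gt 1 4) //; lia.
  + by rewrite (form_letter_23 a) ?(form_letter_gt 1 a) ?(form_letter_gt 4 a) //; lia.
- rewrite doubleS !addSn; set m := (j.*2 + 4)%N in IH n_range *.
  have [e1V emV eaV] := IH ltac:(lia).
  rewrite (alt_vecSS d m) ?oddD ?odd_double //.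
  split=> [|| a a_range]; rewrite !(formDr, formNr) ?formxx.
  + by rewrite e1V !(form_letter_lt 1) //; lia.
  + by rewrite eaV ?(form_letter_gt m.+1) //; lia.
  + by rewrite eaV ?(form_letter_gt m.+1) ?(form_letter_gt m.+2) //; lia.
Qed.

Lemma form_alt_vec_pred n : ~~ odd n -> (6 <= n <= d)%N ->
  form (e n.-1) (alt_vec d n) = 1.
Proof.
case: n => [|[|m]] //=; rewrite !negbK => even_m m_range.
have [_ _ eaV] := form_alt_vec m even_m ltac:(lia).
rewrite (alt_vecSS d m) // !(formDr, formNr) formxx eaV ?(form_letter_lt m.+1) //; lia.
Qed.

Lemma alt_vec_closure_step n : ~~ odd n -> (6 <= n)%N -> (n + 4 <= d)%N ->
  cl (alt_vec d n) -> cl (alt_vec d (n + 4)).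
Proof.
case: n => [//|m] even_m1 m_ge5 m_range cl_m.
have [e1V emV eaV] := form_alt_vec m.+1 even_m1 ltac:(lia).
have em'V := form_alt_vec_pred m.+1 even_m1 ltac:(lia).
have -> : alt_vec d (m.+1 + 4) =
    alt_vec d m.+1 - e (m + 2) + e (m + 3) - e (m + 4) + e (m + 5).
  by rewrite addSn !addnS addn0 !alt_vecSS //= negbK.
apply: (Omega_closed_extend (Omega_closure_closed pib d (canonical_basis d))
  (e 1) _ (fun j => e (m + j))) => //=.
- by apply: letter_closure; lia.
- by move=> j j_le5; apply: letter_closure; lia.
- by move=> j j_le5; apply: form_letter_lt; lia.
- by move=> i j ij_range; apply: form_letter_lt; lia.
- case=> [|[|j]] j_le5; first by rewrite addn0.
  + by rewrite addn1.
  + by rewrite eaV //; lia.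
Qed.

Lemma alt_vec2_closure : (2 <= d)%N -> cl (alt_vec d 2).
Proof.
move=> d_ge2.
have -> : alt_vec d 2 = - (e 1 - e 2).
  by rewrite (alt_vecSS d 0) // alt_vec0 sub0r opprB addrC.
have closedX := Omega_closure_closed pib d (canonical_basis d).
Omega_derive closedX ltac:(apply: letter_closure; lia)
  ltac:(apply: form_letter_lt; lia).
Qed.

Lemma alt_vec_closure beta : cl (alt_vec d 6) -> (beta <= d)%N -> (beta %% 4 = 2)%N ->
  cl (alt_vec d beta).
Proof.
move=> cl6 + beta_mod4.
have [-> | [j ->]] : beta = 2%N \/ exists j, beta = (4 * j + 6)%N.
  have [j ->] : exists j, beta = (4 * j + 2)%N by exists (beta %/ 4)%N; lia.
  by case: j => [|j]; [left | right; exists j]; lia.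
- by move=> d_ge2; apply: alt_vec2_closure.
elim: j => [//|j IH] j_range.
have -> : (4 * j.+1 + 6 = (4 * j + 6) + 4)%N by lia.
apply: alt_vec_closure_step; [by rewrite oddD oddM | lia | lia | apply: IH; lia].
Qed.

End BlockOmega.

Section BaseCases.
Variable d : nat.
Local Notation e := (letter_vec d).

Lemma alt_vec6_closure_tau : (6 <= d)%N ->
  Omega_closure pib_tau d (canonical_basis d) (alt_vec d 6).
Proof.
move=> d_ge6; have closedX := Omega_closure_closed pib_tau d (canonical_basis d).
have gram a b : a \in iota 1 6 -> b \in iota 1 6 ->
    form pib_tau d (e a) (e b) = omega_block 5 a b.
  rewrite !mem_iota => a_range b_range.
  by apply: (form_letter_block (omega_entry_tau d d_ge6)); lia.
have -> : alt_vec d 6 = e 2 - (e 1 - e 4) + (- e 3 - (e 5 - e 6)).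
  rewrite (alt_vecSS d 4) // (alt_vecSS d 2) // (alt_vecSS d 0) // alt_vec0.
  by apply/rowP => i; rewrite !mxE; ring.
Omega_derive closedX ltac:(apply: letter_closure; lia)
  ltac:(rewrite ?(formDl, formDr, formNl, formNr) ?gram //=).
Qed.

Lemma alt_vec6_closure_sigma : (8 <= d)%N ->
  Omega_closure pib_sigma d (canonical_basis d) (alt_vec d 6).
Proof.
move=> d_ge8; have closedX := Omega_closure_closed pib_sigma d (canonical_basis d).
have gram a b : a \in iota 1 8 -> b \in iota 1 8 ->
    form pib_sigma d (e a) (e b) = omega_block 7 a b.
  rewrite !mem_iota => a_range b_range.
  by apply: (form_letter_block (omega_entry_sigma d d_ge8)); lia.
(* e_2 and e_3 pair to 0 with e_4, ..., e_7 here, so the derivation needs e_8. *)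
have -> : alt_vec d 6 = e 4 + (e 2 - (e 5 - e 8) - (e 1 + e 3 + (e 8 - e 6))).
  rewrite (alt_vecSS d 4) // (alt_vecSS d 2) // (alt_vecSS d 0) // alt_vec0.
  by apply/rowP => i; rewrite !mxE; ring.
Omega_derive closedX ltac:(apply: letter_closure; lia)
  ltac:(rewrite ?(formDl, formDr, formNl, formNr) ?gram //=).
Qed.

End BaseCases.

Theorem lemma4p2 (pib : nat -> nat -> nat) (d beta : nat) :
  ((pib = pib_tau /\ (6 <= d)%N) \/ (pib = pib_sigma /\ (8 <= d)%N)) ->
  (beta <= d)%N -> (beta %% 4 = 2)%N ->
  Omega_closure pib d (canonical_basis d) (alt_vec d beta).
Proof.
case=> [[-> d_ge6] | [-> d_ge8]].
- apply: (alt_vec_closure (omega_entry_tau d d_ge6)).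
  exact: alt_vec6_closure_tau.
- apply: (alt_vec_closure (omega_entry_sigma d d_ge8)).
  exact: alt_vec6_closure_sigma.
Qed.
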